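(* Let $p=(p_1,p_2,p_3)$, $q=(q_1,q_2,q_3)\in\mathbb Z^3$ with $\sum p_i=\sum q_i$, $p_1\le p_2\le p_3$, $q_1\le q_2\le q_3$, such that the $S^1_{p,q}$-action on $SU(3)$ is free and $q_2=p_1$ or $q_2=p_3$. Then, up to diffeomorphism of the quotient, the action is one of: (1) $p=(0,0,0)$, $q=(-1,0,1)$; (2) $p=(0,1,1)$, $q=(0,0,2)$.
   Context: $S^1_{p,q}$ acts on $SU(3)$ by $z\star A=\mathrm{diag}(z^{p_1},z^{p_2},z^{p_3})A\,\mathrm{diag}(\bar z^{q_1},\bar z^{q_2},\bar z^{q_3})$; it is free iff $\gcd(p_1-q_{\sigma(1)},p_2-q_{\sigma(2)})=1$ for all $\sigma\in S_3$. Quotients are considered up to the diffeomorphisms induced by permuting the $p_i$, permuting the $q_i$, swapping $p$ and $q$, adding a common integer to all $p_i,q_j$, and replacing $(p,q)$ by $((-p_3,-p_2,-p_1),(-q_3,-q_2,-q_1))$. *)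

From Stdlib Require Import ZArith Relations.
Open Scope Z_scope.

Record trip := mkT { t1 : Z; t2 : Z; t3 : Z }.

(* Freeness of the S^1_{p,q} action on SU(3):
   gcd(p1 - q_{s(1)}, p2 - q_{s(2)}) = 1 for all six permutations s of {1,2,3}. *)
Definition free_action (p q : trip) : Prop :=
  let pairs := (fun a b => Z.gcd (t1 p - a) (t2 p - b) = 1) in
  pairs (t1 q) (t2 q) /\ pairs (t1 q) (t3 q) /\
  pairs (t2 q) (t1 q) /\ pairs (t2 q) (t3 q) /\
  pairs (t3 q) (t1 q) /\ pairs (t3 q) (t2 q).

Definition swap12 (a : trip) : trip := mkT (t2 a) (t1 a) (t3 a).
Definition swap23 (a : trip) : trip := mkT (t1 a) (t3 a) (t2 a).
Definition shift (k : Z) (a : trip) : trip := mkT (t1 a + k) (t2 a + k) (t3 a + k).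
Definition negrev (a : trip) : trip := mkT (- t3 a) (- t2 a) (- t1 a).

(* One elementary move inducing a diffeomorphism of quotients.
   The transpositions (12),(23) generate all permutations of the entries. *)
Inductive move : trip * trip -> trip * trip -> Prop :=
  | mv_p12 p q : move (p, q) (swap12 p, q)
  | mv_p23 p q : move (p, q) (swap23 p, q)
  | mv_q12 p q : move (p, q) (p, swap12 q)
  | mv_q23 p q : move (p, q) (p, swap23 q)
  | mv_swap p q : move (p, q) (q, p)
  | mv_shift k p q : move (p, q) (shift k p, shift k q)
  | mv_negrev p q : move (p, q) (negrev p, negrev q).

Definition quot_equiv : trip * trip -> trip * trip -> Prop :=
  clos_refl_sym_trans _ move.

(* Freeness gives gcd(p_1 - q_s(1), p_2 - q_s(2)) = 1 for every
   permutation s.  When q2 = p1, taking s(1) = 2 makes the first entry 0, so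
   |p2 - q1| = |p2 - q3| = 1; together with the orderings and the equal sums
   this forces (p, q) to be a shift of ((0,0,0),(-1,0,1)) or of
   ((0,1,1),(0,0,2)).  The case q2 = p3 is reduced to the case q2 = p1 by the
   symmetry (p, q) |-> (negrev p, negrev q), which preserves the orderings,
   the equal-sum condition and (thanks to the equal-sum condition) freeness. *)
From Pilot Require Import Defs.
From Stdlib Require Import ZArith Relations Lia.
Open Scope Z_scope.

(* Shifting both triples by a common integer does not change the quotient;
   stated backwards, so that a shifted pair can be brought to normal form. *)
Lemma quot_equiv_unshift (k : Z) (p q : trip) :
  quot_equiv (Defs.shift k p, Defs.shift k q) (p, q).
Proof. apply rst_sym, rst_step, mv_shift. Qed.

Lemma quot_equiv_negrev (p q : trip) :
  quot_equiv (p, q) (negrev p, negrev q).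
Proof. apply rst_step, mv_negrev. Qed.

Lemma gcd_0_l_unit (y : Z) : Z.gcd 0 y = 1 -> Z.abs y = 1.
Proof. now rewrite Z.gcd_0_l. Qed.

(* If x + y + z = 0 then gcd(z, y) = gcd(x, y): the third difference can
   replace the first one, which is what makes freeness symmetric. *)
Lemma gcd_third (x y z : Z) : x + y + z = 0 -> Z.gcd z y = Z.gcd x y.
Proof.
  intros Hsum.
  replace z with (- x + (-1) * y) by lia.
  now rewrite Z.gcd_comm, Z.gcd_add_mult_diag_r, Z.gcd_comm, Z.gcd_opp_l.
Qed.

(* Freeness is invariant under negrev of both triples, provided the sums agree:
   each pair condition for (negrev p, negrev q) involves p3, p2, and equals,
   via gcd_third, a pair condition for (p, q) involving p1, p2. *)
Lemma free_action_negrev (p q : trip) :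
  t1 p + t2 p + t3 p = t1 q + t2 q + t3 q ->
  free_action p q -> free_action (negrev p) (negrev q).
Proof.
  destruct p as [a1 a2 a3], q as [b1 b2 b3]; unfold free_action; simpl.
  intros Hsum (F12 & F13 & F21 & F23 & F31 & F32).
  assert (Hneg : forall i j, Z.gcd (- a3 - - i) (- a2 - - j) = Z.gcd (a3 - i) (a2 - j))
    by (intros i j; rewrite <- Z.gcd_opp_l, <- Z.gcd_opp_r; f_equal; lia).
  rewrite !Hneg.
  repeat split;
    [ rewrite (gcd_third (a1 - b1)) | rewrite (gcd_third (a1 - b2))
    | rewrite (gcd_third (a1 - b1)) | rewrite (gcd_third (a1 - b3))
    | rewrite (gcd_third (a1 - b2)) | rewrite (gcd_third (a1 - b3)) ];
    assumption || lia.
Qed.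

Lemma classification_q2_eq_p1 (p q : trip) :
  t1 p + t2 p + t3 p = t1 q + t2 q + t3 q ->
  t1 p <= t2 p <= t3 p ->
  t1 q <= t2 q <= t3 q ->
  free_action p q ->
  t2 q = t1 p ->
  exists a : Z,
    (p = Defs.shift a (mkT 0 0 0) /\ q = Defs.shift a (mkT (-1) 0 1)) \/
    (p = Defs.shift a (mkT 0 1 1) /\ q = Defs.shift a (mkT 0 0 2)).
Proof.
  destruct p as [a1 a2 a3], q as [b1 b2 b3]; unfold free_action, Defs.shift; cbn [t1 t2 t3].
  intros Hsum Hp Hq (_ & _ & F21 & F23 & _ & _) ->.
  (* With q2 = p1 the pairs (q2, q1) and (q2, q3) have first entry 0. *)
  rewrite Z.sub_diag in F21, F23.
  apply gcd_0_l_unit in F21; apply gcd_0_l_unit in F23.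
  exists a1.
  assert (Hcases : (a2 = a1 /\ a3 = a1 /\ b1 = a1 - 1 /\ b3 = a1 + 1) \/
                   (a2 = a1 + 1 /\ a3 = a1 + 1 /\ b1 = a1 /\ b3 = a1 + 2)) by lia.
  destruct Hcases as [(-> & -> & -> & ->) | (-> & -> & -> & ->)];
    [left | right]; split; f_equal; lia.
Qed.

Theorem mainTheorem3 (p q : trip) :
  t1 p + t2 p + t3 p = t1 q + t2 q + t3 q ->
  t1 p <= t2 p <= t3 p ->
  t1 q <= t2 q <= t3 q ->
  free_action p q ->
  (t2 q = t1 p \/ t2 q = t3 p) ->
  quot_equiv (p, q) (mkT 0 0 0, mkT (-1) 0 1) \/
  quot_equiv (p, q) (mkT 0 1 1, mkT 0 0 2).
Proof.
  intros Hsum Hp Hq Hfree [Hq2 | Hq2].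
  - destruct (classification_q2_eq_p1 p q Hsum Hp Hq Hfree Hq2)
      as [a [[-> ->] | [-> ->]]];
      [left | right]; apply quot_equiv_unshift.
  - (* negrev turns q2 = p3 into q2 = p1 and preserves all hypotheses. *)
    assert (Hsum' : t1 (negrev p) + t2 (negrev p) + t3 (negrev p)
                    = t1 (negrev q) + t2 (negrev q) + t3 (negrev q))
      by (cbn [negrev t1 t2 t3]; lia).
    assert (Hp' : t1 (negrev p) <= t2 (negrev p) <= t3 (negrev p))
      by (cbn [negrev t1 t2 t3]; lia).
    assert (Hq' : t1 (negrev q) <= t2 (negrev q) <= t3 (negrev q))
      by (cbn [negrev t1 t2 t3]; lia).
    assert (Hq2' : t2 (negrev q) = t1 (negrev p)) by (cbn [negrev t1 t2 t3]; lia).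
    destruct (classification_q2_eq_p1 (negrev p) (negrev q) Hsum' Hp' Hq'
                (free_action_negrev p q Hsum Hfree) Hq2')
      as [a [[Ep Eq] | [Ep Eq]]]; [left | right].
    all: apply (rst_trans _ _ _ (negrev p, negrev q));
      [apply quot_equiv_negrev | rewrite Ep, Eq; apply quot_equiv_unshift].
Qed.
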